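(* Consider the dynamic trial-offer market with social influence under the quality ranking with $n\ge2$ products, visibilities $v_1\ge v_2\ge\cdots\ge v_n>0$, initial appeals $A_1,\dots,A_n>0$ and qualities $1\ge q_1>q_2>\cdots>q_n\ge 0$. Then almost surely $\frac{d_{1,t}}{\sum_{j=1}^n d_{j,t}}\to1$ as $t\to\infty$, i.e. the market converges almost surely to a monopoly for product 1 (the product of highest quality).
   Context: Dynamic trial-offer market with social influence under the quality ranking: product $i$ is permanently displayed in position $i$ with visibility $v_i$. Let $d_{i,t}$ be the number of purchases of product $i$ before step $t$ ($d_{i,1}=0$) and $a_{i,t}=A_i+d_{i,t}$. At step $t$ one participant tries product $i$ with probability $\frac{v_i a_{i,t}}{\sum_j v_j a_{j,t}}$, then purchases it with probability $q_i$ (independently); if purchased, $d_{i,t+1}=d_{i,t}+1$, all other counts unchanged. The market share of product $i$ at step $t$ is $d_{i,t}/\sum_j d_{j,t}$. *)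

From Stdlib Require Import Reals.
Open Scope R_scope.

(* Products are indexed 0..n-1 (paper's product i is index i-1).
   A market state is the vector of purchase counts d : nat -> nat. *)

Fixpoint rsum (n : nat) (f : nat -> R) : R :=
  match n with
  | O => 0
  | S k => rsum k f + f k
  end.

Definition incr (d : nat -> nat) (i : nat) : nat -> nat :=
  fun j => if Nat.eqb j i then S (d j) else d j.

Definition appeal (A : nat -> R) (d : nat -> nat) (i : nat) : R := A i + INR (d i).

Definition ptry (n : nat) (v A : nat -> R) (d : nat -> nat) (i : nat) : R :=
  v i * appeal A d i / rsum n (fun j => v j * appeal A d j).

Definition pbuy (n : nat) (v A q : nat -> R) (d : nat -> nat) (i : nat) : R :=
  ptry n v A d i * q i.

Definition share1 (n : nat) (d : nat -> nat) : R :=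
  INR (d 0%nat) / rsum n (fun j => INR (d j)).

(* hitprob n v A q B T s d : probability that, starting at step s in state d
   (d = d_{.,s}) and running the chain for T further steps, there is a step
   s' in [s, s+T] with B s' d_{.,s'} = true. *)
Fixpoint hitprob (n : nat) (v A q : nat -> R) (B : nat -> (nat -> nat) -> bool)
    (T s : nat) (d : nat -> nat) : R :=
  if B s d then 1 else
  match T with
  | O => 0
  | S T' =>
      rsum n (fun i => pbuy n v A q d i * hitprob n v A q B T' (S s) (incr d i))
      + (1 - rsum n (fun i => pbuy n v A q d i)) * hitprob n v A q B T' (S s) d
  end.

Definition far_after (n : nat) (eps : R) (t : nat) : nat -> (nat -> nat) -> bool :=
  fun s d => andb (Nat.leb t s)
                  (if Rlt_dec eps (Rabs (share1 n d - 1)) then true else false).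

(* P( exists s with t <= s <= T : |d_{1,s}/sum_j d_{j,s} - 1| > eps ),
   the chain starting at step 1 with d_{.,1} = 0. *)
Definition prob_far (n : nat) (v A q : nat -> R) (eps : R) (t T : nat) : R :=
  hitprob n v A q (far_after n eps t) (T - 1) 1 (fun _ => 0%nat).

(* Almost sure convergence of the share of product 1 to 1, expressed through
   the finite-horizon laws: for every eps > 0,
   P(sup_{s >= t} |X_s - 1| > eps) -> 0 as t -> oo, where
   P(exists s >= t, ...) = sup_T P(exists s in [t,T], ...). *)
Definition as_monopoly (n : nat) (v A q : nat -> R) : Prop :=
  forall eps delta : R, 0 < eps -> 0 < delta ->
    exists t0 : nat, forall t T : nat, (t0 <= t)%nat ->
      prob_far n v A q eps t T <= delta.

(* Two nonnegative supermartingales of the purchase chain control the probability of a late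
   excursion of the share of product 1 away from 1, uniformly in the horizon.
   On reachable states each step ends in a purchase with probability at least some pm > 0, so
   (1/2)^N / (1 - pm/2)^t is a supermartingale (N = total sales): after a long time N is large
   with high probability.  Since v_i q_i < v_1 q_1 for i >= 2, exponents c < p can be chosen so
   that a discrete version of d_1^(-c) * sum_(i>=2) d_i^p is a supermartingale.  If the share of
   product 1 is below 1 - eps after N sales, some competitor has at least eps N / (n - 1) sales,
   and this potential is then of order N^(p-c), hence large once N is large. *)

From Stdlib Require Import Reals Lra Lia.
Open Scope R_scope.

Lemma rsum_ext k f g : (forall i, (i < k)%nat -> f i = g i) -> rsum k f = rsum k g.
Proof.
  induction k as [|k IH]; intros Hfg; simpl; [reflexivity|].
  f_equal; [apply IH; intros i Hi|]; apply Hfg; lia.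
Qed.

Lemma rsum_le k f g : (forall i, (i < k)%nat -> f i <= g i) -> rsum k f <= rsum k g.
Proof.
  induction k as [|k IH]; intros Hfg; simpl; [lra|].
  apply Rplus_le_compat; [apply IH; intros i Hi|]; apply Hfg; lia.
Qed.

Lemma rsum_add k f g : rsum k (fun i => f i + g i) = rsum k f + rsum k g.
Proof. induction k as [|k IH]; simpl; [|rewrite IH]; ring. Qed.

Lemma rsum_scal k c f : rsum k (fun i => c * f i) = c * rsum k f.
Proof. induction k as [|k IH]; simpl; [|rewrite IH]; ring. Qed.

Lemma rsum_const k c : rsum k (fun _ => c) = INR k * c.
Proof. induction k as [|k IH]; simpl rsum; [simpl; ring|]. rewrite IH, S_INR; ring. Qed.

Lemma rsum_nonneg k f : (forall i, (i < k)%nat -> 0 <= f i) -> 0 <= rsum k f.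
Proof.
  intros Hf. replace 0 with (rsum k (fun _ => 0)) by (rewrite rsum_const; ring).
  now apply rsum_le.
Qed.

Lemma rsum_shift k f : (1 <= k)%nat -> rsum k f = f 0%nat + rsum (k - 1) (fun i => f (S i)).
Proof.
  intros Hk. destruct k as [|k]; [lia|]. replace (S k - 1)%nat with k by lia. clear Hk.
  induction k as [|k IH]; simpl in *; [ring|]. rewrite IH; ring.
Qed.

Lemma rsum_update k f g i : (i < k)%nat ->
  (forall j, (j < k)%nat -> j <> i -> g j = f j) -> rsum k g = rsum k f + (g i - f i).
Proof.
  induction k as [|k IH]; intros Hi Hgf; [lia|]. simpl.
  destruct (Nat.eq_dec i k) as [->|Hik].
  - rewrite (rsum_ext k g f) by (intros; apply Hgf; lia). ring.
  - rewrite IH, (Hgf k) by (lia || (intros; apply Hgf; lia)). ring.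
Qed.

Lemma rsum_ge_term k f i : (i < k)%nat -> (forall j, (j < k)%nat -> 0 <= f j) -> f i <= rsum k f.
Proof.
  induction k as [|k IH]; intros Hi Hf; simpl; [lia|].
  assert (0 <= rsum k f) by (apply rsum_nonneg; intros; apply Hf; lia).
  destruct (Nat.eq_dec i k) as [->|Hik]; [lra|].
  assert (f i <= rsum k f) by (apply IH; [lia|intros; apply Hf; lia]).
  assert (0 <= f k) by (apply Hf; lia). lra.
Qed.

Lemma rsum_last k f : (1 <= k)%nat -> rsum k f = rsum (k - 1) f + f (k - 1)%nat.
Proof. intros Hk. destruct k as [|k]; [lia|]. simpl. now rewrite Nat.sub_0_r. Qed.

Lemma rsum_le_prefix k k' f : (k <= k')%nat -> (forall i, (i < k')%nat -> 0 <= f i) ->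
  rsum k f <= rsum k' f.
Proof.
  intros Hk Hf. induction Hk as [|k' Hk IH]; [lra|]. simpl.
  assert (0 <= f k') by (apply Hf; lia).
  assert (rsum k f <= rsum k' f) by (apply IH; intros; apply Hf; lia). lra.
Qed.

Lemma rsum_le_max_term k f : (1 <= k)%nat -> exists i, (i < k)%nat /\ rsum k f <= INR k * f i.
Proof.
  intros Hk. induction k as [|k IH]; [lia|].
  destruct (Nat.eq_dec k 0) as [->|Hk0]; [exists 0%nat; simpl; split; [lia|lra]|].
  destruct IH as (i & Hi & Hsum); [lia|]. simpl rsum. rewrite S_INR.
  destruct (Rle_lt_dec (f i) (f k)) as [Hik|Hki].
  - exists k. split; [lia|].
    assert (INR k * f i <= INR k * f k) by (apply Rmult_le_compat_l; [apply pos_INR|lra]). lra.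
  - exists i. split; [lia|].
    assert (0 <= INR k) by apply pos_INR. nra.
Qed.

Fixpoint rprod (k : nat) (f : nat -> R) : R :=
  match k with O => 1 | S k' => rprod k' f * f k' end.

Lemma rprod_pos k f : (forall j, (j < k)%nat -> 0 < f j) -> 0 < rprod k f.
Proof.
  induction k as [|k IH]; intros Hf; simpl; [lra|].
  apply Rmult_lt_0_compat; [apply IH; intros|]; apply Hf; lia.
Qed.

Lemma rprod_le k f g : (forall j, (j < k)%nat -> 0 <= f j <= g j) -> rprod k f <= rprod k g.
Proof.
  intros Hfg. enough (0 <= rprod k f <= rprod k g) by lra.
  induction k as [|k IH]; simpl; [lra|].
  destruct IH as [IH0 IH1]; [intros; apply Hfg; lia|].
  destruct (Hfg k) as [Hk0 Hk1]; [lia|]. split; [|apply Rmult_le_compat]; nra.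
Qed.

Lemma rprod_pow k f e : rprod k f ^ e = rprod k (fun j => f j ^ e).
Proof. induction k as [|k IH]; simpl; [apply pow1|]. now rewrite Rpow_mult_distr, IH. Qed.

Lemma rprod_add a b f : rprod (a + b) f = rprod a f * rprod b (fun j => f (a + j)%nat).
Proof.
  induction b as [|b IH]; simpl; [rewrite Nat.add_0_r; ring|].
  rewrite Nat.add_succ_r; simpl; rewrite IH; ring.
Qed.

Lemma rprod_telescope k z : (forall j, (j <= k)%nat -> z j <> 0) ->
  rprod k (fun j => z (S j) / z j) = z k / z 0%nat.
Proof.
  induction k as [|k IH]; intros Hz; simpl.
  - field. apply Hz; lia.
  - rewrite IH by (intros; apply Hz; lia).
    field. split; apply Hz; lia.
Qed.

Lemma bernoulli_ineq h e : -1 <= h -> 1 + INR e * h <= (1 + h) ^ e.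
Proof.
  intros Hh. induction e as [|e IH]; [simpl; lra|]. rewrite S_INR. simpl pow.
  assert (0 <= INR e * h * h) by (pose proof (pos_INR e); nra). nra.
Qed.
Lemma pow_ratio_le w r : 0 < w -> (w / (w + 1)) ^ r <= w / (w + INR r).
Proof.
  intros Hw. pose proof (pos_INR r).
  assert (Hb : 1 + INR r * (1 / w) <= (1 + 1 / w) ^ r)
    by (apply bernoulli_ineq; assert (0 <= 1 / w) by (apply Rle_mult_inv_pos; lra); lra).
  replace (w / (w + 1)) with (/ (1 + 1 / w)) by (field; lra).
  rewrite pow_inv. replace (w / (w + INR r)) with (/ (1 + INR r * (1 / w))) by (field; lra).
  apply Rinv_le_contravar; [|exact Hb].
  assert (0 <= INR r * (1 / w)) by (apply Rmult_le_pos; [lra|apply Rle_mult_inv_pos; lra]). lra.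
Qed.

Definition damp_exponent (m r : nat) : R := INR r / (INR (S r) * INR m).

Lemma damp_exponent_nonneg m r : (1 <= m)%nat -> 0 <= damp_exponent m r.
Proof.
  intros Hm. apply Rle_mult_inv_pos; [apply pos_INR|].
  apply Rmult_lt_0_compat; apply lt_0_INR; lia.
Qed.

Lemma damp_factor_pow_ge w m r : 1 <= w -> (1 <= m)%nat ->
  (w / (w + 1)) ^ r <= (1 - damp_exponent m r / (w + INR r)) ^ (m * S r).
Proof.
  intros Hw Hm. unfold damp_exponent. pose proof (pos_INR r). rewrite S_INR.
  assert (Hm' : 1 <= INR m) by (apply (le_INR 1); lia).
  eapply Rle_trans; [apply pow_ratio_le; lra|].
  eapply Rle_trans; [|apply bernoulli_ineq].
  - right. rewrite mult_INR, S_INR. field. lra.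
  - assert (INR r / ((INR r + 1) * INR m) / (w + INR r) <= 1); [|lra].
    apply Rmult_le_reg_r with ((INR r + 1) * INR m * (w + INR r));
      [repeat apply Rmult_lt_0_compat; lra|].
    replace (INR r / ((INR r + 1) * INR m) / (w + INR r) * ((INR r + 1) * INR m * (w + INR r)))
      with (INR r) by (field; lra).
    assert (1 <= (INR r + 1) * INR m) by nra. nra.
Qed.

Fixpoint sales (n : nat) (d : nat -> nat) : nat :=
  match n with O => O | S k => (sales k d + d k)%nat end.

Lemma INR_sales n d : INR (sales n d) = rsum n (fun j => INR (d j)).
Proof. induction n as [|n IH]; simpl; [reflexivity|]. now rewrite plus_INR, IH. Qed.

Lemma sales_incr n d i : (i < n)%nat -> sales n (incr d i) = S (sales n d).
Proof.
  intros Hi. apply INR_eq. rewrite S_INR, !INR_sales.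
  rewrite (rsum_update n (fun j => INR (d j)) _ i Hi).
  - unfold incr. rewrite Nat.eqb_refl, S_INR. ring.
  - intros j _ Hji. unfold incr. now rewrite (proj2 (Nat.eqb_neq j i) Hji).
Qed.

Lemma sales_ge_term n d j : (j < n)%nat -> (d j <= sales n d)%nat.
Proof.
  intros Hj. apply INR_le. rewrite INR_sales.
  apply (rsum_ge_term n (fun j => INR (d j))); [exact Hj|]. intros; apply pos_INR.
Qed.

Lemma sales_zero n : sales n (fun _ => 0%nat) = 0%nat.
Proof. induction n as [|n IH]; simpl; [|rewrite IH]; reflexivity. Qed.

Section Market.

Variables (n : nat) (v A q : nat -> R).
Hypothesis Hn : (2 <= n)%nat.
Hypothesis Hv : forall i : nat, (S i < n)%nat -> v (S i) <= v i.
Hypothesis Hvpos : 0 < v (n - 1)%nat.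
Hypothesis HA : forall i : nat, (i < n)%nat -> 0 < A i.
Hypothesis Hq1 : q 0%nat <= 1.
Hypothesis Hq : forall i : nat, (S i < n)%nat -> q (S i) < q i.
Hypothesis Hqn : 0 <= q (n - 1)%nat.

Lemma v_antitone i j : (i <= j < n)%nat -> v j <= v i.
Proof.
  intros [Hij Hjn]. induction Hij as [|j Hij IH]; [lra|].
  apply Rle_trans with (v j); [apply Hv | apply IH]; lia.
Qed.

Lemma q_decreasing i j : (i < j < n)%nat -> q j < q i.
Proof.
  intros [Hij Hjn]. induction Hij as [|j Hij IH]; [apply Hq; lia|].
  apply Rlt_trans with (q j); [apply Hq | apply IH]; lia.
Qed.

Lemma q_antitone i j : (i <= j < n)%nat -> q j <= q i.
Proof.
  intros Hij. destruct (Nat.eq_dec i j) as [->|Hne]; [lra|].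
  left; apply q_decreasing; lia.
Qed.

Lemma v_pos i : (i < n)%nat -> 0 < v i.
Proof. intros Hi. apply Rlt_le_trans with (v (n - 1)%nat); [|apply v_antitone]; lia || lra. Qed.

Lemma q_nonneg i : (i < n)%nat -> 0 <= q i.
Proof. intros Hi. apply Rle_trans with (q (n - 1)%nat); [|apply q_antitone]; lia || lra. Qed.

Lemma q_le_1 i : (i < n)%nat -> q i <= 1.
Proof. intros Hi. apply Rle_trans with (q 0%nat); [apply q_antitone|]; lia || lra. Qed.

Lemma weight_pos d i : (i < n)%nat -> 0 < v i * appeal A d i.
Proof.
  intros Hi. apply Rmult_lt_0_compat; [now apply v_pos|].
  unfold appeal. pose proof (pos_INR (d i)). pose proof (HA i Hi). lra.
Qed.

Definition total_weight (d : nat -> nat) : R := rsum n (fun j => v j * appeal A d j).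

Lemma total_weight_pos d : 0 < total_weight d.
Proof.
  apply Rlt_le_trans with (v 0%nat * appeal A d 0%nat); [apply weight_pos; lia|].
  apply (rsum_ge_term n (fun j => v j * appeal A d j)); [lia|].
  intros j Hj. left; now apply weight_pos.
Qed.

Lemma pbuy_eq d i : pbuy n v A q d i = v i * appeal A d i * q i / total_weight d.
Proof. unfold pbuy, ptry, total_weight, Rdiv. ring. Qed.

Lemma pbuy_nonneg d i : (i < n)%nat -> 0 <= pbuy n v A q d i.
Proof.
  intros Hi. rewrite pbuy_eq. apply Rle_mult_inv_pos; [|apply total_weight_pos].
  apply Rmult_le_pos; [left; now apply weight_pos | now apply q_nonneg].
Qed.

Lemma sum_pbuy_eq d : rsum n (fun i => pbuy n v A q d i)
  = rsum n (fun i => v i * appeal A d i * q i) / total_weight d.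
Proof.
  unfold Rdiv. rewrite Rmult_comm, <- rsum_scal.
  apply rsum_ext; intros. rewrite pbuy_eq. unfold Rdiv; ring.
Qed.

Lemma sum_pbuy_le_1 d : rsum n (fun i => pbuy n v A q d i) <= 1.
Proof.
  pose proof (total_weight_pos d). rewrite sum_pbuy_eq.
  apply Rmult_le_reg_r with (total_weight d); [lra|].
  unfold Rdiv. rewrite Rmult_assoc, Rinv_l, Rmult_1_r, Rmult_1_l by lra.
  apply rsum_le. intros i Hi.
  pose proof (weight_pos d i Hi). pose proof (q_le_1 i Hi). nra.
Qed.

Definition mean_next (f : (nat -> nat) -> R) (d : nat -> nat) : R :=
  rsum n (fun i => pbuy n v A q d i * f (incr d i))
  + (1 - rsum n (fun i => pbuy n v A q d i)) * f d.

Lemma mean_next_sub f d :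
  mean_next f d - f d = rsum n (fun i => pbuy n v A q d i * (f (incr d i) - f d)).
Proof.
  unfold mean_next.
  rewrite (rsum_ext n (fun i => pbuy n v A q d i * (f (incr d i) - f d))
    (fun i => pbuy n v A q d i * f (incr d i) + (- f d) * pbuy n v A q d i)) by (intros; ring).
  rewrite rsum_add, rsum_scal.
  change (rsum n (pbuy n v A q d)) with (rsum n (fun i => pbuy n v A q d i)). ring.
Qed.

Lemma mean_next_lin f g c d :
  mean_next (fun d' => f d' + c * g d') d = mean_next f d + c * mean_next g d.
Proof.
  unfold mean_next.
  rewrite (rsum_ext n _ (fun i => pbuy n v A q d i * f (incr d i)
                                 + c * (pbuy n v A q d i * g (incr d i)))) by (intros; ring).
  rewrite rsum_add, rsum_scal. ring.
Qed.

Lemma hitprob_le_potential (B : nat -> (nat -> nat) -> bool) (I : (nat -> nat) -> Prop)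
    (V : nat -> (nat -> nat) -> R) :
  (forall s d, I d -> 0 <= V s d) ->
  (forall s d, I d -> B s d = true -> 1 <= V s d) ->
  (forall s d, I d -> mean_next (V (S s)) d <= V s d) ->
  (forall d i, I d -> (i < n)%nat -> pbuy n v A q d i <> 0 -> I (incr d i)) ->
  forall T s d, I d -> hitprob n v A q B T s d <= V s d.
Proof.
  intros HV0 HVB HVsuper HI T. induction T as [|T IH]; intros s d Hd; simpl;
    destruct (B s d) eqn:HBsd; auto.
  eapply Rle_trans; [|apply (HVsuper s d Hd)]. apply Rplus_le_compat.
  - apply rsum_le. intros i Hi.
    destruct (Req_dec (pbuy n v A q d i) 0) as [Hz|Hz]; [rewrite Hz; lra|].
    apply Rmult_le_compat_l; [now apply pbuy_nonneg|]. apply IH, HI; auto.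
  - apply Rmult_le_compat_l; [pose proof (sum_pbuy_le_1 d); lra|]. apply IH; auto.
Qed.

(* A quality-0 product is never bought; on such states the purchase probability is bounded
   below. *)
Definition worthless_unsold (d : nat -> nat) : Prop := q (n - 1)%nat = 0 -> d (n - 1)%nat = 0%nat.

Lemma worthless_unsold_incr d i :
  worthless_unsold d -> pbuy n v A q d i <> 0 -> worthless_unsold (incr d i).
Proof.
  unfold worthless_unsold, incr. intros Hd Hbuy Hq0.
  destruct (Nat.eqb_spec (n - 1) i) as [<-|_]; [|auto].
  exfalso; apply Hbuy. unfold pbuy. rewrite Hq0; ring.
Qed.

Lemma sum_pbuy_ge k Q d : (k <= n)%nat -> 0 <= Q -> (forall i, (i < k)%nat -> Q <= q i) ->
  Q * rsum k (fun j => v j * appeal A d j) / total_weight d <= rsum n (fun i => pbuy n v A q d i).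
Proof.
  intros Hk HQ HQq. rewrite sum_pbuy_eq. unfold Rdiv.
  apply Rmult_le_compat_r; [left; apply Rinv_0_lt_compat, total_weight_pos|].
  rewrite <- rsum_scal. apply Rle_trans with (rsum k (fun i => v i * appeal A d i * q i)).
  - apply rsum_le. intros i Hi.
    pose proof (weight_pos d i ltac:(lia)). pose proof (HQq i Hi). nra.
  - apply rsum_le_prefix; [exact Hk|]. intros i Hi.
    apply Rmult_le_pos; [left; now apply weight_pos | now apply q_nonneg].
Qed.

Lemma purchase_prob_lower_bound : exists pm, 0 < pm /\
  forall d, worthless_unsold d -> pm <= rsum n (fun i => pbuy n v A q d i).
Proof.
  destruct Hqn as [Hqpos|Hq0].
  - exists (q (n - 1)%nat). split; [exact Hqpos|]. intros d _.
    eapply Rle_trans;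
      [|apply (sum_pbuy_ge n (q (n - 1)%nat)); [lia|lra|intros; apply q_antitone; lia]].
    pose proof (total_weight_pos d). right. unfold total_weight in *. field. lra.
  - set (Q := q (n - 2)%nat). set (B := v 0%nat * A 0%nat).
    set (Y := v (n - 1)%nat * A (n - 1)%nat).
    assert (HQ : 0 < Q) by (rewrite Hq0; apply q_decreasing; lia).
    assert (HB : 0 < B) by (apply Rmult_lt_0_compat; [apply v_pos|apply HA]; lia).
    assert (HY : 0 < Y) by (apply Rmult_lt_0_compat; [apply v_pos|apply HA]; lia).
    exists (Q * B / (B + Y)). split; [apply Rdiv_lt_0_compat; nra|]. intros d Hd.
    set (X := rsum (n - 1) (fun j => v j * appeal A d j)).
    assert (HW : total_weight d = X + Y).
    { unfold total_weight. rewrite rsum_last by lia. unfold appeal at 2.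
      rewrite (Hd (eq_sym Hq0)). simpl INR. unfold X, Y. ring. }
    assert (HX : B <= X).
    { apply Rle_trans with (v 0%nat * appeal A d 0%nat).
      - unfold B, appeal. pose proof (pos_INR (d 0%nat)). pose proof (v_pos 0 ltac:(lia)). nra.
      - apply (rsum_ge_term (n - 1) (fun j => v j * appeal A d j)); [lia|].
        intros j Hj. left; apply weight_pos; lia. }
    eapply Rle_trans; [|apply (sum_pbuy_ge (n - 1) Q); [lia|lra|intros; apply q_antitone; lia]].
    fold X. rewrite HW. unfold Rdiv. rewrite !Rmult_assoc. apply Rmult_le_compat_l; [lra|].
    apply Rmult_le_reg_r with ((B + Y) * (X + Y)); [nra|].
    replace (B * / (B + Y) * ((B + Y) * (X + Y))) with (B * (X + Y)) by (field; lra).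
    replace (X * / (X + Y) * ((B + Y) * (X + Y))) with (X * (B + Y)) by (field; lra). nra.
Qed.

Definition volume_potential (gam K : R) (s : nat) (d : nat -> nat) : R :=
  K * (/ 2) ^ sales n d * gam ^ s.

Lemma volume_potential_nonneg gam K s d : 0 < gam -> 0 <= K -> 0 <= volume_potential gam K s d.
Proof.
  intros Hgam HK. unfold volume_potential.
  repeat apply Rmult_le_pos; try apply pow_le; lra.
Qed.

Lemma volume_potential_super gam K s d : 0 < gam -> 0 <= K ->
  gam * (1 - rsum n (fun i => pbuy n v A q d i) / 2) <= 1 ->
  mean_next (volume_potential gam K (S s)) d <= volume_potential gam K s d.
Proof.
  intros Hgam HK Hdrift. pose proof (volume_potential_nonneg gam K s d Hgam HK).
  set (V := volume_potential gam K s d). set (P := rsum n (fun i => pbuy n v A q d i)).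
  unfold mean_next. fold P.
  rewrite (rsum_ext n (fun i => pbuy n v A q d i * volume_potential gam K (S s) (incr d i))
    (fun i => V * (gam / 2) * pbuy n v A q d i)).
  2: { intros i Hi. unfold V, volume_potential. rewrite sales_incr by exact Hi.
       cbn [pow]. field. }
  rewrite rsum_scal. change (rsum n (pbuy n v A q d)) with P.
  replace (volume_potential gam K (S s) d) with (V * gam)
    by (unfold V, volume_potential; cbn [pow]; ring).
  replace (V * (gam / 2) * P + (1 - P) * (V * gam)) with (V * (gam * (1 - P / 2))) by field.
  apply Rle_trans with (V * 1); [now apply Rmult_le_compat_l | lra].
Qed.

Lemma volume_potential_ge_1 gam M t s d : 1 <= gam -> (t <= s)%nat -> (sales n d < M)%nat ->
  1 <= volume_potential gam (2 ^ M * (/ gam) ^ t) s d.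
Proof.
  intros Hgam Hts HM. unfold volume_potential.
  replace (2 ^ M * (/ gam) ^ t * (/ 2) ^ sales n d * gam ^ s)
    with (2 ^ (M - sales n d) * gam ^ (s - t)).
  - rewrite <- (Rmult_1_r 1). apply Rmult_le_compat; try lra; apply pow_R1_Rle; lra.
  - replace M with (sales n d + (M - sales n d))%nat at 2 by lia.
    replace s with (t + (s - t))%nat at 2 by lia.
    rewrite !pow_add, !pow_inv. field. split; apply pow_nonzero; lra.
Qed.

Definition boost (p : R) (i k : nat) : R := rprod k (fun j => 1 + p / (A i + INR j)).

Definition damp (c : R) (k : nat) : R := rprod k (fun j => 1 - c / (A 0%nat + INR j)).

(* Discrete analogue of d_1^(-c) * sum_(i>=2) d_i^p. *)
Definition rival_potential (p c : R) (d : nat -> nat) : R :=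
  damp c (d 0%nat) * rsum (n - 1) (fun i => boost p (S i) (d (S i))).

Lemma boost_pos p i k : (i < n)%nat -> 0 <= p -> 0 < boost p i k.
Proof.
  intros Hi Hp. apply rprod_pos. intros j _. pose proof (pos_INR j). pose proof (HA i Hi).
  assert (0 <= p / (A i + INR j)) by (apply Rle_mult_inv_pos; lra). lra.
Qed.

Lemma damp_factor_pos c j : 0 <= c < A 0%nat -> 0 <= c / (A 0%nat + INR j) < 1.
Proof.
  intros Hc. pose proof (pos_INR j). split; [apply Rle_mult_inv_pos; lra|].
  apply Rmult_lt_reg_r with (A 0%nat + INR j); [lra|].
  unfold Rdiv. rewrite Rmult_assoc, Rinv_l by lra. lra.
Qed.

Lemma damp_pos c k : 0 <= c < A 0%nat -> 0 < damp c k.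
Proof. intros Hc. apply rprod_pos. intros j _. pose proof (damp_factor_pos c j Hc). lra. Qed.

Lemma damp_antitone c k k' : 0 <= c < A 0%nat -> (k <= k')%nat -> damp c k' <= damp c k.
Proof.
  intros Hc Hk. unfold damp. replace k' with (k + (k' - k))%nat by lia. rewrite rprod_add.
  fold (damp c k). pose proof (damp_pos c k Hc).
  apply Rle_trans with (damp c k * 1); [|lra]. apply Rmult_le_compat_l; [lra|].
  apply Rle_trans with (rprod (k' - k) (fun _ => 1)).
  - apply rprod_le. intros j _. pose proof (damp_factor_pos c (k + j) Hc). lra.
  - induction (k' - k)%nat as [|b IH]; simpl; lra.
Qed.

Lemma rival_potential_nonneg p c d : 0 <= p -> 0 <= c < A 0%nat -> 0 <= rival_potential p c d.
Proof.
  intros Hp Hc. apply Rmult_le_pos; [left; now apply damp_pos|].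
  apply rsum_nonneg. intros i Hi. left; apply boost_pos; [lia|exact Hp].
Qed.

Lemma rival_potential_zero p c : rival_potential p c (fun _ => 0%nat) = INR (n - 1).
Proof.
  unfold rival_potential.
  rewrite (rsum_ext (n - 1) (fun i => boost p (S i) 0) (fun _ => 1)) by reflexivity.
  rewrite rsum_const. unfold damp. simpl. ring.
Qed.

Lemma rival_potential_drift_leader p c d :
  pbuy n v A q d 0 * (rival_potential p c (incr d 0) - rival_potential p c d)
  = - (v 0%nat * q 0%nat * c / total_weight d) * rival_potential p c d.
Proof.
  pose proof (total_weight_pos d). pose proof (pos_INR (d 0%nat)). pose proof (HA 0 ltac:(lia)).
  unfold rival_potential. rewrite pbuy_eq.
  replace (incr d 0 0%nat) with (S (d 0%nat)) by reflexivity.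
  rewrite (rsum_ext (n - 1) (fun i => boost p (S i) (incr d 0 (S i)))
    (fun i => boost p (S i) (d (S i)))) by reflexivity.
  change (damp c (S (d 0%nat))) with (damp c (d 0%nat) * (1 - c / (A 0%nat + INR (d 0%nat)))).
  unfold appeal. field. lra.
Qed.

Lemma rival_potential_drift_rival p c d i : (S i < n)%nat ->
  pbuy n v A q d (S i) * (rival_potential p c (incr d (S i)) - rival_potential p c d)
  = v (S i) * q (S i) * p / total_weight d * damp c (d 0%nat) * boost p (S i) (d (S i)).
Proof.
  intros Hi. pose proof (total_weight_pos d).
  pose proof (pos_INR (d (S i))). pose proof (HA (S i) Hi).
  unfold rival_potential. rewrite pbuy_eq.
  replace (incr d (S i) 0%nat) with (d 0%nat) by reflexivity.
  rewrite (rsum_update (n - 1) (fun j => boost p (S j) (d (S j))) _ i) by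
    (lia || (intros j _ Hji; unfold incr;
             now rewrite (proj2 (Nat.eqb_neq (S j) (S i)) ltac:(lia)))).
  unfold incr at 1. rewrite Nat.eqb_refl.
  change (boost p (S i) (S (d (S i))))
    with (boost p (S i) (d (S i)) * (1 + p / (A (S i) + INR (d (S i))))).
  unfold appeal. field. lra.
Qed.

Lemma rival_potential_super p c d : 0 <= p -> 0 <= c < A 0%nat ->
  (forall i, (1 <= i < n)%nat -> v i * q i * p <= v 0%nat * q 0%nat * c) ->
  mean_next (rival_potential p c) d <= rival_potential p c d.
Proof.
  intros Hp Hc Hrates. pose proof (total_weight_pos d).
  enough (mean_next (rival_potential p c) d - rival_potential p c d <= 0) by lra.
  rewrite mean_next_sub, rsum_shift, rival_potential_drift_leader by lia.
  rewrite (rsum_ext (n - 1) _ (fun i => v (S i) * q (S i) * p / total_weight d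
      * damp c (d 0%nat) * boost p (S i) (d (S i))))
    by (intros; apply rival_potential_drift_rival; lia).
  enough (rsum (n - 1) (fun i => v (S i) * q (S i) * p / total_weight d
      * damp c (d 0%nat) * boost p (S i) (d (S i)))
    <= v 0%nat * q 0%nat * c / total_weight d * rival_potential p c d) by lra.
  unfold rival_potential. rewrite <- Rmult_assoc, <- rsum_scal. apply rsum_le. intros i Hi.
  pose proof (damp_pos c (d 0%nat) Hc). pose proof (boost_pos p (S i) (d (S i)) ltac:(lia) Hp).
  pose proof (Hrates (S i) ltac:(lia)). unfold Rdiv.
  apply Rmult_le_compat_r; [lra|]. apply Rmult_le_compat_r; [lra|].
  apply Rmult_le_compat_r; [left; now apply Rinv_0_lt_compat|lra].
Qed.

Lemma boost_pow_ge m i k : (1 <= m)%nat -> (i < n)%nat ->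
  (A i + INR k) / A i <= boost (/ INR m) i k ^ m.
Proof.
  intros Hm Hi. pose proof (HA i Hi). assert (Hm' : 0 < INR m) by (apply lt_0_INR; lia).
  unfold boost. rewrite rprod_pow.
  replace ((A i + INR k) / A i) with ((A i + INR k) / (A i + INR 0)) by (simpl; f_equal; ring).
  rewrite <- (rprod_telescope k (fun j => A i + INR j)) by (intros; pose proof (pos_INR j); lra).
  apply rprod_le. intros j _. pose proof (pos_INR j). rewrite S_INR.
  assert (0 <= / INR m / (A i + INR j))
    by (apply Rle_mult_inv_pos; [left; apply Rinv_0_lt_compat|]; lra).
  split; [apply Rle_mult_inv_pos; lra|].
  eapply Rle_trans; [|apply bernoulli_ineq; lra]. right. field. lra.
Qed.

(* With e = m (r + 1) we have e c = r, so damp c N ^ e decays like N^(-r). *)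
Lemma damp_pow_ge m r b : (1 <= m)%nat -> damp_exponent m r < A 0%nat ->
  damp (damp_exponent m r) (S r) ^ (m * S r) * / INR (S r + b) ^ r
  <= damp (damp_exponent m r) (S r + b) ^ (m * S r).
Proof.
  intros Hm Hc. pose proof (HA 0 ltac:(lia)). pose proof (damp_exponent_nonneg m r Hm).
  set (c := damp_exponent m r) in *.
  set (z := fun j => / (A 0%nat + 1 + INR j)).
  assert (Hz : forall j, 0 < A 0%nat + 1 + INR j) by (intros; pose proof (pos_INR j); lra).
  unfold damp at 2. rewrite rprod_add. fold (damp c (S r)). rewrite Rpow_mult_distr.
  apply Rmult_le_compat_l; [apply pow_le; left; apply damp_pos; lra|].
  apply Rle_trans with (rprod b (fun j => z (S j) / z j) ^ r).
  - rewrite <- pow_inv, rprod_telescope by (intros; apply Rinv_neq_0_compat, Rgt_not_eq, Hz).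
    apply pow_incr. unfold z. rewrite plus_INR, S_INR. simpl (INR 0).
    pose proof (pos_INR r). pose proof (pos_INR b). set (a := A 0%nat + 1) in *.
    assert (1 <= a) by (unfold a; lra).
    split; [left; apply Rinv_0_lt_compat; lra|].
    replace (/ (a + INR b) / / (a + 0)) with (a / (a + INR b)) by (field; lra).
    apply Rmult_le_reg_r with ((INR r + 1 + INR b) * (a + INR b)); [nra|].
    replace (/ (INR r + 1 + INR b) * ((INR r + 1 + INR b) * (a + INR b)))
      with (a + INR b) by (field; lra).
    replace (a / (a + INR b) * ((INR r + 1 + INR b) * (a + INR b)))
      with (a * (INR r + 1 + INR b)) by (field; lra). nra.
  - rewrite !rprod_pow. apply rprod_le. intros j _. unfold z.
    pose proof (Hz j). pose proof (Hz (S j)).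
    split; [apply pow_le, Rle_mult_inv_pos; [left|]; apply Rinv_0_lt_compat; lra|].
    replace (/ (A 0%nat + 1 + INR (S j)) / / (A 0%nat + 1 + INR j))
      with ((A 0%nat + 1 + INR j) / (A 0%nat + 1 + INR j + 1)) by (rewrite S_INR; field; lra).
    replace (A 0%nat + INR (S r + j)) with (A 0%nat + 1 + INR j + INR r)
      by (rewrite plus_INR, S_INR; ring).
    apply damp_factor_pow_ge; [pose proof (pos_INR j); lra | exact Hm].
Qed.

Lemma rival_potential_pow_ge m r kap d i : (1 <= m)%nat -> damp_exponent m r < A 0%nat ->
  (S r <= sales n d)%nat -> (1 <= i < n)%nat -> 0 < kap ->
  kap * INR (sales n d) <= (A i + INR (d i)) / A i ->
  damp (damp_exponent m r) (S r) ^ (m * S r) * kap ^ S r * INR (sales n d)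
  <= rival_potential (/ INR m) (damp_exponent m r) d ^ (m * S r).
Proof.
  intros Hm Hc HN Hi Hkap Hdi. pose proof (damp_exponent_nonneg m r Hm) as Hc0.
  set (c := damp_exponent m r) in *. set (N := sales n d) in *. set (e := (m * S r)%nat).
  assert (Hp : 0 <= / INR m) by (left; apply Rinv_0_lt_compat, lt_0_INR; lia).
  assert (HNpos : 0 < INR N) by (apply lt_0_INR; lia).
  pose proof (damp_pos c N (conj Hc0 Hc)) as HdampN.
  pose proof (boost_pos (/ INR m) i (d i) ltac:(lia) Hp) as Hboost_pos.
  assert (Hrival : damp c N * boost (/ INR m) i (d i) <= rival_potential (/ INR m) c d).
  { unfold rival_potential. apply Rmult_le_compat; try lra.
    - apply damp_antitone; [lra|]. apply sales_ge_term; lia.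
    - replace i with (S (i - 1)) by lia.
      apply (rsum_ge_term (n - 1) (fun j => boost (/ INR m) (S j) (d (S j)))); [lia|].
      intros j Hj. left; apply boost_pos; [lia|exact Hp]. }
  eapply Rle_trans; [|apply pow_incr; split; [|exact Hrival]; left; now apply Rmult_lt_0_compat].
  rewrite Rpow_mult_distr.
  pose proof (damp_pow_ge m r (N - S r) Hm Hc) as Hdamp. fold c e in Hdamp.
  replace (S r + (N - S r))%nat with N in Hdamp by lia.
  assert (Hboost : (kap * INR N) ^ S r <= boost (/ INR m) i (d i) ^ e).
  { unfold e. rewrite pow_mult. apply pow_incr. split; [left; now apply Rmult_lt_0_compat|].
    eapply Rle_trans; [exact Hdi|]. apply boost_pow_ge; lia. }
  apply Rle_trans with (damp c (S r) ^ e * / INR N ^ r * (kap * INR N) ^ S r).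
  - right. rewrite Rpow_mult_distr, <- !tech_pow_Rmult. field. apply pow_nonzero; lra.
  - apply Rmult_le_compat; try exact Hdamp; try exact Hboost.
    + apply Rmult_le_pos; [apply pow_le; left; apply damp_pos; lra|].
      left; apply Rinv_0_lt_compat, pow_lt; lra.
    + apply pow_le. left; now apply Rmult_lt_0_compat.
Qed.

Lemma far_share_rival_large eps d : 0 < eps -> (1 <= sales n d)%nat ->
  eps < Rabs (share1 n d - 1) ->
  exists i, (1 <= i < n)%nat /\
    eps / (INR (n - 1) * rsum n A) * INR (sales n d) <= (A i + INR (d i)) / A i.
Proof.
  intros Heps HN Hfar. set (N := INR (sales n d)).
  set (rivals := rsum (n - 1) (fun i => INR (d (S i)))).
  assert (HNpos : 0 < N) by (apply lt_0_INR; lia).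
  assert (HN0 : N = INR (d 0%nat) + rivals)
    by (unfold N; rewrite INR_sales, rsum_shift by lia; reflexivity).
  assert (Hrivals : eps * N < rivals).
  { unfold share1 in Hfar. rewrite <- INR_sales in Hfar. fold N in Hfar.
    assert (0 <= rivals) by (apply rsum_nonneg; intros; apply pos_INR).
    replace (INR (d 0%nat) / N - 1) with (- (rivals / N)) in Hfar by (rewrite HN0; field; lra).
    rewrite Rabs_Ropp, Rabs_right in Hfar by (apply Rle_ge, Rle_mult_inv_pos; lra).
    apply Rmult_lt_compat_r with (r := N) in Hfar; [|lra].
    replace (rivals / N * N) with rivals in Hfar by (field; lra). lra. }
  destruct (rsum_le_max_term (n - 1) (fun i => INR (d (S i)))) as (i & Hi & Hmax); [lia|].
  fold rivals in Hmax. exists (S i). split; [lia|].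
  set (x := INR (d (S i))) in *. set (a := A (S i)). set (SA := rsum n A).
  assert (Ha : 0 < a) by (apply HA; lia).
  assert (HaSA : a <= SA) by (apply (rsum_ge_term n A); [lia|intros; left; apply HA; lia]).
  assert (Hk : 0 < INR (n - 1)) by (apply lt_0_INR; lia).
  assert (Hx : 0 <= x) by apply pos_INR.
  apply Rle_trans with (x / SA).
  - replace (eps / (INR (n - 1) * SA) * N) with (eps * N / INR (n - 1) * / SA) by (field; lra).
    apply Rmult_le_compat_r; [left; apply Rinv_0_lt_compat; lra|].
    apply Rmult_le_reg_r with (INR (n - 1)); [lra|].
    replace (eps * N / INR (n - 1) * INR (n - 1)) with (eps * N) by (field; lra). lra.
  - unfold Rdiv. apply Rle_trans with (x * / a).
    + apply Rmult_le_compat_l; [lra|]. now apply Rinv_le_contravar.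
    + apply Rmult_le_compat_r; [left; now apply Rinv_0_lt_compat|lra].
Qed.

Lemma rival_rates_exist : exists m r, (1 <= m)%nat /\ damp_exponent m r < A 0%nat /\
  forall i, (1 <= i < n)%nat -> v i * q i * / INR m <= v 0%nat * q 0%nat * damp_exponent m r.
Proof.
  unfold damp_exponent.
  set (w0 := v 0%nat * q 0%nat). set (w1 := v 1%nat * q 1%nat).
  pose proof (v_pos 1 ltac:(lia)). pose proof (q_nonneg 1 ltac:(lia)).
  pose proof (v_antitone 0 1 ltac:(lia)). pose proof (q_decreasing 0 1 ltac:(lia)).
  assert (Hw1 : 0 <= w1) by (unfold w1; nra).
  assert (Hw : w1 < w0) by (unfold w0, w1; nra).
  destruct (INR_unbounded (w1 / (w0 - w1))) as [r Hr].
  destruct (INR_unbounded (/ A 0%nat)) as [m Hm].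
  pose proof (HA 0 ltac:(lia)). pose proof (pos_INR r). pose proof (pos_INR m).
  assert (Hr' : w1 * (INR r + 1) <= w0 * INR r).
  { apply Rmult_lt_compat_r with (r := w0 - w1) in Hr; [|lra].
    replace (w1 / (w0 - w1) * (w0 - w1)) with w1 in Hr by (field; lra). lra. }
  exists (S m), r. rewrite !S_INR. split; [lia|]. split.
  - apply Rmult_lt_reg_r with ((INR r + 1) * (INR m + 1)); [nra|].
    replace (INR r / ((INR r + 1) * (INR m + 1)) * ((INR r + 1) * (INR m + 1))) with (INR r)
      by (field; lra).
    apply Rmult_lt_compat_r with (r := A 0%nat) in Hm; [|lra].
    rewrite Rinv_l in Hm by lra. nra.
  - intros i Hi.
    assert (v i * q i <= w1).
    { pose proof (v_antitone 1 i Hi). pose proof (q_antitone 1 i Hi).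
      pose proof (q_nonneg i ltac:(lia)). pose proof (v_pos i ltac:(lia)). unfold w1. nra. }
    apply Rmult_le_reg_r with ((INR r + 1) * (INR m + 1)); [nra|].
    replace (v i * q i * / (INR m + 1) * ((INR r + 1) * (INR m + 1)))
      with (v i * q i * (INR r + 1)) by (field; lra).
    replace (w0 * (INR r / ((INR r + 1) * (INR m + 1))) * ((INR r + 1) * (INR m + 1)))
      with (w0 * INR r) by (field; lra).
    apply Rle_trans with (w1 * (INR r + 1)); [apply Rmult_le_compat_r; lra | exact Hr'].
Qed.

Lemma rival_potential_exists eps L : 0 < eps -> 0 < L ->
  exists (W : (nat -> nat) -> R) (M : nat),
    W (fun _ => 0%nat) = INR (n - 1) /\ (forall d, 0 <= W d) /\
    (forall d, mean_next W d <= W d) /\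
    (forall d, (M <= sales n d)%nat -> eps < Rabs (share1 n d - 1) -> L <= W d).
Proof.
  intros Heps HL. destruct rival_rates_exist as (m & r & Hm & Hc & Hrates).
  pose proof (damp_exponent_nonneg m r Hm) as Hc0.
  set (c := damp_exponent m r) in *. set (e := (m * S r)%nat).
  assert (Hp : 0 <= / INR m) by (left; apply Rinv_0_lt_compat, lt_0_INR; lia).
  set (kap := eps / (INR (n - 1) * rsum n A)).
  assert (Hkap : 0 < kap).
  { apply Rdiv_lt_0_compat; [lra|]. apply Rmult_lt_0_compat; [apply lt_0_INR; lia|].
    apply Rlt_le_trans with (A 0%nat); [apply HA; lia|].
    apply (rsum_ge_term n A); [lia|intros; left; apply HA; lia]. }
  set (C := damp c (S r) ^ e * kap ^ S r).
  assert (HC : 0 < C)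
    by (apply Rmult_lt_0_compat; apply pow_lt; [apply damp_pos; lra|exact Hkap]).
  destruct (INR_unbounded (L ^ e / C)) as [M0 HM0].
  exists (rival_potential (/ INR m) c), (M0 + S r)%nat.
  split; [apply rival_potential_zero|]. split; [intros; now apply rival_potential_nonneg|].
  split; [intros; apply rival_potential_super; auto; lra|].
  intros d HM Hfar.
  destruct (far_share_rival_large eps d Heps ltac:(lia) Hfar) as (i & Hi & Hdi).
  pose proof (rival_potential_pow_ge m r kap d i Hm Hc ltac:(lia) Hi Hkap Hdi) as Hpow.
  fold c e C in Hpow.
  assert (HLe : L ^ e < C * INR (sales n d)).
  { apply Rlt_le_trans with (C * INR M0).
    - replace (C * INR M0) with (INR M0 * C) by ring.
      apply Rmult_lt_reg_r with (/ C); [now apply Rinv_0_lt_compat|].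
      replace (INR M0 * C * / C) with (INR M0) by (field; lra). exact HM0.
    - apply Rmult_le_compat_l; [lra|]. apply le_INR; lia. }
  destruct (Rle_lt_dec L (rival_potential (/ INR m) c d)) as [|Hlt]; [assumption|].
  assert (rival_potential (/ INR m) c d ^ e <= L ^ e); [|lra].
  apply pow_incr. split; [apply rival_potential_nonneg|]; lra.
Qed.

Lemma prob_far_le eps gam L W M t T : 1 < gam -> 0 < L ->
  (forall d, worthless_unsold d -> gam * (1 - rsum n (fun i => pbuy n v A q d i) / 2) <= 1) ->
  W (fun _ => 0%nat) = INR (n - 1) -> (forall d, 0 <= W d) -> (forall d, mean_next W d <= W d) ->
  (forall d, (M <= sales n d)%nat -> eps < Rabs (share1 n d - 1) -> L <= W d) ->
  prob_far n v A q eps t T <= 2 ^ M * (/ gam) ^ t * gam + / L * INR (n - 1).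
Proof.
  intros Hgam HL Hdrift HW0 HWnn HWsuper HWfar.
  set (V := fun s d => volume_potential gam (2 ^ M * (/ gam) ^ t) s d + / L * W d).
  assert (HK : 0 <= 2 ^ M * (/ gam) ^ t)
    by (apply Rmult_le_pos; [apply pow_le; lra|apply pow_le; left; apply Rinv_0_lt_compat; lra]).
  assert (HLinv : 0 < / L) by now apply Rinv_0_lt_compat.
  replace (2 ^ M * (/ gam) ^ t * gam + / L * INR (n - 1)) with (V 1%nat (fun _ => 0%nat))
    by (unfold V, volume_potential; rewrite sales_zero, HW0; cbn [pow]; ring).
  apply (hitprob_le_potential _ worthless_unsold V);
    [| | |intros; now apply worthless_unsold_incr|intros _; reflexivity].
  - intros s d _. pose proof (HWnn d).
    pose proof (volume_potential_nonneg gam _ s d ltac:(lra) HK). unfold V. nra.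
  - intros s d _ Hfar. unfold far_after in Hfar. apply andb_prop in Hfar as [Hts Hfar].
    apply Nat.leb_le in Hts.
    destruct (Rlt_dec eps (Rabs (share1 n d - 1))) as [Hbad|]; [|discriminate].
    pose proof (HWnn d). pose proof (volume_potential_nonneg gam _ s d ltac:(lra) HK). unfold V.
    destruct (Compare_dec.lt_dec (sales n d) M) as [HNM|HNM].
    + pose proof (volume_potential_ge_1 gam M t s d ltac:(lra) Hts HNM). nra.
    + pose proof (HWfar d ltac:(lia) Hbad).
      assert (1 <= / L * W d)
        by (rewrite <- (Rinv_l L) by lra; apply Rmult_le_compat_l; lra). lra.
  - intros s d Hd. unfold V. rewrite mean_next_lin. apply Rplus_le_compat.
    + apply volume_potential_super; [lra|exact HK|now apply Hdrift].
    + apply Rmult_le_compat_l; [lra|apply HWsuper].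
Qed.

Lemma market_monopoly : as_monopoly n v A q.
Proof.
  intros eps delta Heps Hdelta.
  destruct purchase_prob_lower_bound as (pm & Hpm & Hpmd).
  assert (Hpm1 : pm <= 1)
    by (eapply Rle_trans;
        [apply (Hpmd (fun _ => 0%nat)); intros _; reflexivity|apply sum_pbuy_le_1]).
  set (gam := / (1 - pm / 2)).
  assert (Hgam : 1 < gam) by (unfold gam; rewrite <- Rinv_1; apply Rinv_lt_contravar; lra).
  assert (Hdrift : forall d, worthless_unsold d ->
    gam * (1 - rsum n (fun i => pbuy n v A q d i) / 2) <= 1).
  { intros d Hd. pose proof (Hpmd d Hd). apply Rle_trans with (gam * (1 - pm / 2)).
    - apply Rmult_le_compat_l; lra.
    - right. unfold gam. field. lra. }
  set (L := 2 * INR (n - 1) / delta).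
  assert (HL : 0 < L)
    by (apply Rdiv_lt_0_compat; [apply Rmult_lt_0_compat; [lra|apply lt_0_INR; lia]|lra]).
  destruct (rival_potential_exists eps L Heps HL) as (W & M & HW0 & HWnn & HWsuper & HWfar).
  assert (HM : 0 < 2 ^ M) by (apply pow_lt; lra).
  destruct (pow_lt_1_zero (/ gam)) with (y := delta / (2 * 2 ^ M * gam)) as [t0 Ht0].
  { rewrite Rabs_right by (left; apply Rinv_0_lt_compat; lra).
    rewrite <- Rinv_1. apply Rinv_lt_contravar; lra. }
  { apply Rdiv_lt_0_compat; [lra|]. apply Rmult_lt_0_compat; lra. }
  exists t0. intros t T Ht.
  eapply Rle_trans; [apply (prob_far_le eps gam L W M); eauto|].
  specialize (Ht0 t Ht).
  rewrite Rabs_right in Ht0 by (apply Rle_ge, pow_le; left; apply Rinv_0_lt_compat; lra).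
  replace (/ L * INR (n - 1)) with (delta / 2)
    by (unfold L; field; split; [lra|apply not_0_INR; lia]).
  apply Rmult_lt_compat_r with (r := 2 * 2 ^ M * gam) in Ht0; [|apply Rmult_lt_0_compat; lra].
  replace (delta / (2 * 2 ^ M * gam) * (2 * 2 ^ M * gam)) with delta in Ht0 by (field; lra). lra.
Qed.

End Market.

Theorem mainTheorem7 (n : nat) (v A q : nat -> R)
  (Hn : (2 <= n)%nat)
  (Hv : forall i : nat, (S i < n)%nat -> v (S i) <= v i)
  (Hvpos : 0 < v (n - 1)%nat)
  (HA : forall i : nat, (i < n)%nat -> 0 < A i)
  (Hq1 : q 0%nat <= 1)
  (Hq : forall i : nat, (S i < n)%nat -> q (S i) < q i)
  (Hqn : 0 <= q (n - 1)%nat) :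
  as_monopoly n v A q.
Proof. exact (market_monopoly n v A q Hn Hv Hvpos HA Hq1 Hq Hqn). Qed.
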